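(* Let $G$ and $H$ be finite groups, and identify the vertex set $G\times H$ of graphs on the direct product with the vertex set of the strong product. Then: (a) $\mathrm{Com}(G\times H)=\mathrm{Com}(G)\boxtimes\mathrm{Com}(H)$. (b) If $|G|$ and $|H|$ are coprime, then $\mathrm{EPow}(G\times H)=\mathrm{EPow}(G)\boxtimes\mathrm{EPow}(H)$. (c) If $|G/G'|$ and $|H/H'|$ are coprime (in particular if $G$ and $H$ are perfect), then $\mathrm{DCom}(G\times H)=\mathrm{DCom}(G)\boxtimes\mathrm{DCom}(H)$.
   Context: $G'$ denotes the derived subgroup. For graphs $\Gamma,\Delta$ with vertex sets $V,W$, the strong product $\Gamma\boxtimes\Delta$ has vertex set $V\times W$, with $(v_1,w_1)\ne(v_2,w_2)$ adjacent iff $v_1$ is equal or adjacent to $v_2$ and $w_1$ is equal or adjacent to $w_2$. For a group $K$, graphs have vertex set $K$ and no loops: $\mathrm{Com}(K)$: distinct $x,y$ adjacent iff $xy=yx$; $\mathrm{EPow}(K)$: adjacent iff $\langle x,y\rangle$ is cyclic; $\mathrm{DCom}(K)$: adjacent iff for every group $L$ with central subgroup $Z$ and $L/Z\cong K$, any preimages of $x,y$ in $L$ commute. *)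

From HB Require Import structures.
From mathcomp Require Import all_boot all_fingroup all_solvable.
Set Implicit Arguments. Unset Strict Implicit. Unset Printing Implicit Defensive.
Import GroupScope.
Local Open Scope group_scope.

(* Simple graphs on a vertex type, as (irreflexive, symmetric) Prop relations. *)
Definition graph (V : Type) := V -> V -> Prop.

Definition strong_prod (V W : Type) (Gam : graph V) (Del : graph W) : graph (V * W) :=
  fun p q => p <> q /\ (p.1 = q.1 \/ Gam p.1 q.1) /\ (p.2 = q.2 \/ Del p.2 q.2).

Definition Com (K : finGroupType) : graph K :=
  fun x y => x <> y /\ commute x y.

Definition EPow (K : finGroupType) : graph K :=
  fun x y => x <> y /\ cyclic <<[set x; y]>>.

Definition DCom (K : finGroupType) : graph K :=
  fun x y => x <> y /\
    forall (L : finGroupType) (Z : {group L}),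
      Z \subset 'Z([set: L]) ->
      forall f : {morphism ([set: L] / Z) >-> K},
        isom ([set: L] / Z) [set: K] f ->
        forall a b : L, f (coset Z a) = x -> f (coset Z b) = y -> commute a b.

From HB Require Import structures.
From mathcomp Require Import all_boot all_fingroup all_solvable.
Set Implicit Arguments. Unset Strict Implicit. Unset Printing Implicit Defensive.
Import GroupScope.
Local Open Scope group_scope.

(* Commutation, and for groups of coprime orders cyclicity of <x, y>, can be checked
   coordinatewise in G x H; this gives (a) and (b).
   For (c), x and y are adjacent in DCom(K) iff they are distinct and any of their lifts to
   any central extension of K commute. A central extension E of G yields the central
   extension E x H of G x H, so adjacency in DCom(G x H) projects to the factors.
   Conversely let phi : M ->> G x H be a central extension and M1, M2 the preimages of G x 1
   and 1 x H: they are central extensions of G and H, M = M1 M2 and [M1, M2] <= ker phi.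
   For a in M1 and b in M2 we get [a, b]^n = [a^n, b] = 1 with n = |G/G'|, because a^n lies
   in M1' ker(phi), which centralises M2 by the three subgroups lemma; symmetrically
   [a, b]^|H/H'| = 1. Coprimality makes M1 and M2 commute, and lifts of two elements of
   G x H then commute as soon as their components do. *)

Lemma strong_prod_rel_graphs (V W : eqType) (Gam : graph V) (Del : graph W) (Pi : graph (V * W))
    (R : V -> V -> Prop) (S : W -> W -> Prop) (T : V * W -> V * W -> Prop) :
    (forall x y, Gam x y <-> x <> y /\ R x y) ->
    (forall x y, Del x y <-> x <> y /\ S x y) ->
    (forall p q, Pi p q <-> p <> q /\ T p q) ->
    (forall p q, T p q <-> R p.1 q.1 /\ S p.2 q.2) ->
    (forall x, R x x) -> (forall y, S y y) ->
  forall p q, Pi p q <-> strong_prod Gam Del p q.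
Proof.
move=> GamE DelE PiE TE Rxx Syy p q; rewrite /strong_prod.
split=> [/PiE[neq_pq /TE [Rpq Spq]] | [neq_pq [eqR eqS]]].
  split=> //; split.
    by have [->|/eqP ?] := eqVneq p.1 q.1; [left | right; apply/GamE].
  by have [->|/eqP ?] := eqVneq p.2 q.2; [left | right; apply/DelE].
apply/PiE; split=> //; apply/TE; split.
  by case: eqR => [->|/GamE[]].
by case: eqS => [->|/DelE[]].
Qed.

Lemma commute_pair (G H : finGroupType) (u v : G * H) :
  commute u v <-> commute u.1 v.1 /\ commute u.2 v.2.
Proof.
case: u v => [x1 x2] [y1 y2]; rewrite /commute /=.
by split=> [[-> ->] | [e1 e2]] //; congr pair.
Qed.

Lemma morphim_gen2 (aT rT : finGroupType) (D : {group aT}) (f : {morphism D >-> rT}) x y :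
  x \in D -> y \in D -> f @* <<[set x; y]>> = <<[set f x; f y]>>.
Proof.
by move=> Dx Dy; rewrite morphim_gen ?morphimU ?morphim_set1 // subUset !sub1set Dx.
Qed.

Lemma cyclic_setX (G H : finGroupType) (A : {group G}) (B : {group H}) :
  coprime #|A| #|B| -> cyclic A -> cyclic B -> cyclic (setX A B).
Proof.
move=> coAB cycA cycB.
rewrite (cyclic_dprod (setX_dprod A B)) ?cardsX ?cards1 ?muln1 ?mul1n //.
  by have := morphim_cyclic (@pairg1 G H) cycA; rewrite morphim_pairg1.
by have := morphim_cyclic (@pair1g G H) cycB; rewrite morphim_pair1g.
Qed.

Lemma cyclic_gen_refl (G : finGroupType) (x : G) : cyclic <<[set x; x]>>.
Proof. by rewrite setUid cycle_cyclic. Qed.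

Lemma cyclic_gen_pair (G H : finGroupType) : coprime #|G| #|H| -> forall u v : G * H,
  cyclic <<[set u; v]>> <-> cyclic <<[set u.1; v.1]>> /\ cyclic <<[set u.2; v.2]>>.
Proof.
move=> coGH [x1 x2] [y1 y2] /=; split=> [cyc_xy | [cyc1 cyc2]].
  split; first by have := morphim_cyclic [morphism of @fst G H] cyc_xy; rewrite morphim_gen2.
  by have := morphim_cyclic [morphism of @snd G H] cyc_xy; rewrite morphim_gen2.
have coG1G2 : coprime #|<<[set x1; y1]>>| #|<<[set x2; y2]>>|.
  by rewrite (coprimeSg (subsetT _)) // (coprimegS (subsetT _)) // !cardsT.
apply: cyclicS (cyclic_setX coG1G2 cyc1 cyc2).
by rewrite gen_subG subUset !sub1set !in_setX !mem_gen ?inE ?eqxx ?orbT.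
Qed.

Definition central_extension (L K : finGroupType) (M : {group L}) (phi : {morphism M >-> K}) :=
  'ker phi \subset 'C(M) /\ phi @* M = [set: K].

Definition lifts_commute (K : finGroupType) (x y : K) :=
  forall (L : finGroupType) (M : {group L}) (phi : {morphism M >-> K}),
  central_extension phi -> {in M &, forall a b, phi a = x -> phi b = y -> commute a b}.

Lemma central_extension_onto (L K : finGroupType) (M : {group L}) (phi : {morphism M >-> K}) :
  central_extension phi -> forall k, exists2 x, x \in M & phi x = k.
Proof.
move=> [_ im_phi] k; have /morphimP[x _ Mx ->] : k \in phi @* M by rewrite im_phi inE.
by exists x.
Qed.

Lemma central_extension_quotient (L K : finGroupType) (Z : {group L})
    (f : {morphism [set: L] / Z >-> K}) :
    Z \subset 'Z([set: L]) -> isom ([set: L] / Z) [set: K] f ->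
  central_extension [morphism of f \o coset Z].
Proof.
move=> sZZ /isomP[/ker_injm kerf1 imf]; split.
  rewrite ker_comp kerf1 -/('ker (coset Z)) ker_coset.
  exact: subset_trans sZZ (subset_trans (subsetIr _ _) (centS (subsetT _))).
rewrite morphim_comp morphpreK; first exact: imf.
exact: morphim_sub.
Qed.

(* DCom only quantifies over quotients of whole groups, so a central extension defined on a
   subgroup M is transported to the group [subg M]. *)
Section SubgroupQuotientPresentation.

Variables (L K : finGroupType) (M : {group L}) (phi : {morphism M >-> K}).
Hypothesis phi_central : central_extension phi.

Lemma comp_sgvalm_morphM : {in [set: subg_of M] &, {morph phi \o sgval : u v / u * v}}.
Proof. by move=> u v _ _; rewrite /= -morphM ?subgP. Qed.
Definition comp_sgvalm := Morphism comp_sgvalm_morphM.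

Lemma ker_comp_sgvalm_center : 'ker comp_sgvalm \subset 'Z([set: subg_of M]).
Proof.
apply/subsetP=> u /mker phi_u; apply/centerP; split=> [|v _]; first exact: in_setT.
apply: subg_inj => /=.
have ker_u : sgval u \in 'ker phi by apply/kerP; rewrite ?subgP.
by apply: (centP (subsetP phi_central.1 _ ker_u)); apply: subgP.
Qed.

Let Z := 'ker comp_sgvalm.
Let sKZ : 'ker (coset Z) \subset Z. Proof. by rewrite ker_coset. Qed.

Definition subg_quotm := factm_morphism sKZ (ker_norm comp_sgvalm).

Lemma subg_quotmE a : a \in M -> subg_quotm (coset Z (subg M a)) = phi a.
Proof. by move=> Ma; apply: etrans (factmE _ _ (in_setT _)) _; rewrite /= subgK. Qed.

Lemma isom_subg_quotm : isom ([set: subg_of M] / Z) [set: K] subg_quotm.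
Proof.
apply/isomP; split; first by apply/injm_factmP; rewrite ker_coset.
rewrite morphim_factm morphimEdom (imset_comp phi sgval) -[sgval @: _]morphimEdom im_sgval.
by rewrite -morphimEdom; exact: phi_central.2.
Qed.

End SubgroupQuotientPresentation.

Lemma DComP (K : finGroupType) (x y : K) : DCom x y <-> x <> y /\ lifts_commute x y.
Proof.
split=> [[neq_xy DCxy] | [neq_xy lifts_xy]]; split=> // L.
  move=> M phi phi_central a b Ma Mb phi_a phi_b.
  have := DCxy _ _ (ker_comp_sgvalm_center phi_central) _ (isom_subg_quotm phi_central)
    (subg M a) (subg M b).
  rewrite !subg_quotmE // => /(_ phi_a phi_b) /(congr1 sgval).
  by rewrite /= !subgK.
move=> Z sZZ f isof a b fa fb.
have nZL : [set: L] \subset 'N(Z) by exact/normal_norm/sub_center_normal.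
have in_dom c : c \in coset Z @*^-1 ([set: L] / Z).
  by rewrite mem_morphpre ?mem_quotient ?(subsetP nZL) ?inE.
exact: (lifts_xy _ _ _ (central_extension_quotient sZZ isof)).
Qed.

Lemma lifts_commute_refl (K : finGroupType) (x : K) : lifts_commute x x.
Proof.
move=> L M phi [cMker _] a b Ma Mb phi_a phi_b.
have [z ker_z ->] : exists2 z, z \in 'ker phi & a = z * b.
  by apply: ker_rcoset; rewrite ?phi_a ?phi_b.
apply/commute_sym/commuteM; last exact: commute_refl.
exact/commute_sym/(centP (subsetP cMker z ker_z)).
Qed.

Section ProductMorphism.

Variables (aT1 aT2 rT1 rT2 : finGroupType) (D1 : {group aT1}) (D2 : {group aT2}).
Variables (f1 : {morphism D1 >-> rT1}) (f2 : {morphism D2 >-> rT2}).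

Lemma setXm_morphM :
  {in setX D1 D2 &, {morph (fun x => (f1 x.1, f2 x.2)) : x y / x * y}}.
Proof.
by move=> [x1 x2] [y1 y2] /setXP[Dx1 Dx2] /setXP[Dy1 Dy2] /=; rewrite !morphM.
Qed.
Definition setXm := Morphism setXm_morphM.

Lemma central_extension_setXm :
  central_extension f1 -> central_extension f2 -> central_extension setXm.
Proof.
move=> [cD1ker1 im1] [cD2ker2 im2]; split.
  apply/subsetP=> -[x1 x2] /morphpreP[/setXP[Dx1 Dx2] /set1P[]].
  move=> /(kerP _ Dx1) K1x1 /(kerP _ Dx2) K2x2.
  apply/centP=> -[y1 y2] /setXP[Dy1 Dy2]; apply/commute_pair; split.
    exact: (centP (subsetP cD1ker1 _ K1x1)).
  exact: (centP (subsetP cD2ker2 _ K2x2)).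
apply/setP=> -[k1 k2]; rewrite !inE.
have /morphimP[x1 _ Dx1 ->] : k1 \in f1 @* D1 by rewrite im1 inE.
have /morphimP[x2 _ Dx2 ->] : k2 \in f2 @* D2 by rewrite im2 inE.
by apply/morphimP; exists (x1, x2); rewrite ?in_setX ?Dx1 ?Dx2.
Qed.

End ProductMorphism.

Lemma central_extension_idm (K : finGroupType) : central_extension (idm [set: K]).
Proof. by rewrite /central_extension ker_idm sub1G morphim_idm. Qed.

Lemma lifts_commute_fst (G H : finGroupType) (u v : G * H) :
  lifts_commute u v -> lifts_commute u.1 v.1.
Proof.
move=> lifts_uv L M phi phi_central a b Ma Mb phi_a phi_b.
have := lifts_uv _ _ _ (central_extension_setXm phi_central (central_extension_idm H))
  (a, u.2) (b, v.2).
rewrite !in_setX Ma Mb !in_setT /= phi_a phi_b -!surjective_pairing.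
by move=> /(_ isT isT erefl erefl) /commute_pair[].
Qed.

Lemma lifts_commute_snd (G H : finGroupType) (u v : G * H) :
  lifts_commute u v -> lifts_commute u.2 v.2.
Proof.
move=> lifts_uv L M phi phi_central a b Ma Mb phi_a phi_b.
have := lifts_uv _ _ _ (central_extension_setXm (central_extension_idm G) phi_central)
  (u.1, a) (v.1, b).
rewrite !in_setX Ma Mb !in_setT /= phi_a phi_b -!surjective_pairing.
by move=> /(_ isT isT erefl erefl) /commute_pair[].
Qed.

Lemma expg_card_abelianization (gT : finGroupType) (G : {group gT}) x :
  x \in G -> x ^+ #|G / G^`(1)| \in G^`(1).
Proof.
move=> Gx; have nG'x := subsetP (der_norm 1 G) x Gx.
by apply: coset_idr; rewrite ?groupX // morphX // expg_cardG // mem_quotient.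
Qed.

Lemma commg_expn_card_abelianization (L K : finGroupType) (A B : {group L})
    (psi : {morphism A >-> K}) a b :
    [~: A, B] \subset 'C(A) -> 'ker psi \subset 'C(B) -> a \in A -> b \in B ->
  [~ a, b] ^+ #|psi @* A / (psi @* A)^`(1)| = 1.
Proof.
move=> cA_AB cB_ker Aa Bb; set n := #|_ / _|.
have cB_A' : A^`(1) \subset 'C(B).
  apply/commG1P; apply: three_subgroup; apply/commG1P; rewrite ?(commGC B) //.
have : a ^+ n \in psi @*^-1 (psi @* A^`(1)).
  by rewrite mem_morphpre ?groupX // morphX // morphim_der // expg_card_abelianization ?mem_morphim.
rewrite morphimK ?der_sub // => /mulsgP[z w ker_z A'w def_an].
have cB_an : a ^+ n \in 'C(B).
  by rewrite def_an groupM // ?(subsetP cB_ker z) ?(subsetP cB_A' w).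
rewrite -commXg; last exact/commute_sym/(centP (subsetP cA_AB _ (mem_commg Aa Bb))).
exact/eqP/commgP/(centP cB_an).
Qed.

Section KernelRestriction.

Variables (L G H : finGroupType) (M : {group L}).
Variables (phi1 : {morphism M >-> G}) (phi2 : {morphism M >-> H}).
Hypothesis cMker : 'ker phi1 :&: 'ker phi2 \subset 'C(M).
Hypothesis im1 : phi1 @* 'ker phi2 = [set: G].

Let sK2M : 'ker phi2 \subset M := normal_sub (ker_normal phi2).

Lemma ker_restrm_ker_cent : 'ker (restrm sK2M phi1) \subset 'C(M).
Proof. by rewrite ker_restrm setIC. Qed.

Lemma central_extension_restrm_ker : central_extension (restrm sK2M phi1).
Proof.
split; first exact: subset_trans ker_restrm_ker_cent (centS sK2M).
by rewrite morphim_restrm setIid.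
Qed.

Lemma mul_kers : 'ker phi2 * 'ker phi1 = M.
Proof.
apply/eqP; rewrite eqEsubset mul_subG ?sK2M ?(normal_sub (ker_normal phi1)) //=.
apply/subsetP=> a Ma; have /morphimP[a1 _ K2a1 phi_a1] : phi1 a \in phi1 @* 'ker phi2.
  by rewrite im1 inE.
apply/mulsgP; exists a1 (a1^-1 * a); rewrite ?mulKVg //.
have Ma1 := subsetP sK2M a1 K2a1.
by apply/kerP; rewrite ?groupM ?groupV // morphM ?groupV // morphV // phi_a1 mulVg.
Qed.

End KernelRestriction.

Section CommutingKernels.

Variables (L G H : finGroupType) (M : {group L}).
Variables (phi1 : {morphism M >-> G}) (phi2 : {morphism M >-> H}).
Hypothesis cMker : 'ker phi1 :&: 'ker phi2 \subset 'C(M).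
Hypothesis im1 : phi1 @* 'ker phi2 = [set: G].
Hypothesis im2 : phi2 @* 'ker phi1 = [set: H].
Hypothesis coGH : coprime #|[set: G] / ([set: G])^`(1)| #|[set: H] / ([set: H])^`(1)|.

Let cMker' : 'ker phi2 :&: 'ker phi1 \subset 'C(M). Proof. by rewrite setIC. Qed.
Let sK1M : 'ker phi1 \subset M := normal_sub (ker_normal phi1).
Let sK2M : 'ker phi2 \subset M := normal_sub (ker_normal phi2).

Lemma commute_kers : {in 'ker phi2 & 'ker phi1, forall a b, commute a b}.
Proof.
move=> a b K2a K1b.
have cM_K21 : [~: 'ker phi2, 'ker phi1] \subset 'C(M).
  apply: subset_trans cMker'; apply: commg_subI; rewrite subsetI subxx /=.
    exact: subset_trans sK2M (ker_norm phi1).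
  exact: subset_trans sK1M (ker_norm phi2).
have [_ im1'] := central_extension_restrm_ker cMker im1.
have [_ im2'] := central_extension_restrm_ker cMker' im2.
have ab_G : [~ a, b] ^+ #|[set: G] / [set: G]^`(1)| = 1.
  rewrite -im1'; apply: commg_expn_card_abelianization K2a K1b.
    exact: subset_trans cM_K21 (centS sK2M).
  exact: subset_trans (ker_restrm_ker_cent cMker) (centS sK1M).
have ba_H : [~ b, a] ^+ #|[set: H] / [set: H]^`(1)| = 1.
  rewrite -im2'; apply: commg_expn_card_abelianization K1b K2a.
    by rewrite commGC; exact: subset_trans cM_K21 (centS sK1M).
  exact: subset_trans (ker_restrm_ker_cent cMker') (centS sK2M).
apply/commgP; rewrite -order_eq1 -dvdn1 -(eqP coGH) dvdn_gcd !order_dvdn ab_G.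
by rewrite -invg_comm expVgn ba_H invg1 eqxx.
Qed.

Lemma commute_of_lifts_commute :
  {in M &, forall a b, lifts_commute (phi1 a) (phi1 b) -> lifts_commute (phi2 a) (phi2 b) ->
    commute a b}.
Proof.
move=> a b Ma Mb lifts1 lifts2.
have := Ma; rewrite -(mul_kers im1) => /mulsgP[a1 a2 K2a1 K1a2 def_a].
have := Mb; rewrite -(mul_kers im1) => /mulsgP[b1 b2 K2b1 K1b2 def_b].
have [Ma1 Ma2] := (subsetP sK2M a1 K2a1, subsetP sK1M a2 K1a2).
have [Mb1 Mb2] := (subsetP sK2M b1 K2b1, subsetP sK1M b2 K1b2).
move: lifts1 lifts2; rewrite def_a def_b (mkerr Ma1 K1a2) (mkerr Mb1 K1b2).
rewrite (mkerl K2a1 Ma2) (mkerl K2b1 Mb2) => lifts1 lifts2.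
have c11 := lifts1 _ _ _ (central_extension_restrm_ker cMker im1) _ _ K2a1 K2b1 erefl erefl.
have c22 := lifts2 _ _ _ (central_extension_restrm_ker cMker' im2) _ _ K1a2 K1b2 erefl erefl.
have c12 := commute_kers K2a1 K1b2.
have c21 := commute_kers K2b1 K1a2.
by apply: commuteM; apply/commute_sym/commuteM; apply: commute_sym.
Qed.

End CommutingKernels.

Section ProductComponents.

Variables (L G H : finGroupType) (M : {group L}) (phi : {morphism M >-> G * H}).
Hypothesis phi_central : central_extension phi.

Lemma fst_comp_morphM : {in M &, {morph (fun x => (phi x).1) : x y / x * y}}.
Proof. by move=> x y Mx My; rewrite /= morphM. Qed.
Definition fst_comp := Morphism fst_comp_morphM.

Lemma snd_comp_morphM : {in M &, {morph (fun x => (phi x).2) : x y / x * y}}.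
Proof. by move=> x y Mx My; rewrite /= morphM. Qed.
Definition snd_comp := Morphism snd_comp_morphM.

Lemma ker_fst_snd_comp : 'ker fst_comp :&: 'ker snd_comp \subset 'C(M).
Proof.
apply: subset_trans phi_central.1; apply/subsetP=> x /setIP[K1x K2x].
have Mx := subsetP (normal_sub (ker_normal fst_comp)) x K1x.
move: (mker K1x) (mker K2x) => /= phi_x1 phi_x2.
by apply/kerP; rewrite // [phi x]surjective_pairing phi_x1 phi_x2.
Qed.

Lemma morphim_fst_ker_snd : fst_comp @* 'ker snd_comp = [set: G].
Proof.
apply/setP=> g; rewrite inE; have [x Mx phi_x] := central_extension_onto phi_central (g, 1).
by apply/morphimP; exists x => //; [apply/kerP | ]; rewrite //= phi_x.
Qed.

Lemma morphim_snd_ker_fst : snd_comp @* 'ker fst_comp = [set: H].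
Proof.
apply/setP=> h; rewrite inE; have [x Mx phi_x] := central_extension_onto phi_central (1, h).
by apply/morphimP; exists x => //; [apply/kerP | ]; rewrite //= phi_x.
Qed.

End ProductComponents.

Lemma lifts_commute_pair (G H : finGroupType) :
    coprime #|[set: G] / ([set: G])^`(1)| #|[set: H] / ([set: H])^`(1)| ->
  forall u v : G * H, lifts_commute u v <-> lifts_commute u.1 v.1 /\ lifts_commute u.2 v.2.
Proof.
move=> coGH u v; split=> [lifts_uv | [lifts1 lifts2] L M phi phi_central a b Ma Mb phi_a phi_b].
  by split; [apply: lifts_commute_fst | apply: lifts_commute_snd].
apply: (commute_of_lifts_commute (ker_fst_snd_comp phi_central)
  (morphim_fst_ker_snd phi_central) (morphim_snd_ker_fst phi_central) coGH Ma Mb).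
all: by rewrite /= phi_a phi_b.
Qed.

Theorem mainTheorem14 (G H : finGroupType) :
  (forall u v : G * H, Com u v <-> strong_prod (@Com G) (@Com H) u v) /\
  (coprime #|G| #|H| ->
     forall u v : G * H, EPow u v <-> strong_prod (@EPow G) (@EPow H) u v) /\
  (coprime #|[set: G] / ([set: G])^`(1)| #|[set: H] / ([set: H])^`(1)| ->
     forall u v : G * H, DCom u v <-> strong_prod (@DCom G) (@DCom H) u v).
Proof.
split; [|split].
- exact: strong_prod_rel_graphs _ _ _ (@commute_pair G H) (@commute_refl G) (@commute_refl H).
- move=> coGH; apply: (strong_prod_rel_graphs (R := fun x y => cyclic <<[set x; y]>>)
    (S := fun x y => cyclic <<[set x; y]>>) _ _ _ (cyclic_gen_pair coGH)) => // x;
  exact: cyclic_gen_refl.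
- move=> coGH; exact: strong_prod_rel_graphs (@DComP G) (@DComP H) (@DComP _)
    (lifts_commute_pair coGH) (@lifts_commute_refl G) (@lifts_commute_refl H).
Qed.
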